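(* Let $M_0>0$, $r\in(0,+\infty]$, $\varphi,\tilde\varphi\in\mathrm{Lip}_\alpha$ and $\tau_0,\tilde\tau_0\in C_+(\Omega)$ with $\|\varphi\|_{\mathrm{Lip}_\alpha}+\|\tau_0\|_\infty\le M_0$ and $\|\tilde\varphi\|_{\mathrm{Lip}_\alpha}+\|\tilde\tau_0\|_\infty\le M_0$. Let $A,\tilde A\in C((-\infty,r),C(\Omega))$ with $A=\varphi$, $\tilde A=\tilde\varphi$ on $(-\infty,0]\times\Omega$, and assume $M:=\max\{\sup_{t\in[0,r)}\|A(t,\cdot)\|_\infty,\sup_{t\in[0,r)}\|\tilde A(t,\cdot)\|_\infty\}<+\infty$. Let $\delta_0(x)=\int_{-\tau_0(x)}^0f(\varphi(s,\cdot))(x)ds$, $\tilde\delta_0(x)=\int_{-\tilde\tau_0(x)}^0f(\tilde\varphi(s,\cdot))(x)ds$, and $\bar\tau_0^\infty:=\max\{\sup_x\tau_0(x),\sup_x\tilde\tau_0(x)\}$. Then there exists a constant $L_\tau>0$ (depending only on $M_0$, $M$, $\alpha$ and $f$) such that for all $t\in[0,r)$ and $x\in\Omega$, $$|\widehat\tau(A_t,\delta_0)(x)-\widehat\tau(\tilde A_t,\tilde\delta_0)(x)|\le L_\tau\Big[\sup_{s\in[-\bar\tau_0^\infty,r)}\|A(s,\cdot)-\tilde A(s,\cdot)\|_\infty+\|\delta_0-\tilde\delta_0\|_\infty\Big].$$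
   Context: $\Omega\subset\mathbb R^n$ compact, $C(\Omega)$ with sup norm, $\alpha\ge0$ fixed. $f:C(\Omega)\to C(\Omega)$ is Lipschitz, $0<f(\phi)(x)\le M_f$ for a constant $M_f$, non-increasing for the pointwise order. $\mathrm{Lip}_\alpha$ is the space of $\phi\in C((-\infty,0],C(\Omega))$ such that $\phi_\alpha(t):=e^{-\alpha|t|}\phi(t,\cdot)$ is bounded and Lipschitz, with norm $\sup_{t\le0}\|\phi_\alpha(t)\|_\infty+\sup_{t\ne s}\|\phi_\alpha(t)-\phi_\alpha(s)\|_\infty/|t-s|$. $A_t(\theta):=A(t+\theta)$ for $\theta\le 0$. For $t\in[0,r)$, $\widehat\tau(A_t,\delta_0)(x)$ denotes the unique nonnegative number $\sigma$ with $\int_{-\sigma}^0f(A_t(s,\cdot))(x)ds=\delta_0(x)$, equivalently $\int_{t-\sigma}^tf(A(s,\cdot))(x)ds=\int_{-\tau_0(x)}^0f(\varphi(s,\cdot))(x)ds$ (and similarly for $\tilde A,\tilde\delta_0$). *)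

From Stdlib Require Import Reals Lra List Classical ClassicalEpsilon.
From Stdlib Require Vectors.Fin.
Open Scope R_scope.

Definition Rn (n : nat) := Fin.t n -> R.

Definition open_set {n : nat} (U : Rn n -> Prop) : Prop :=
  forall x, U x -> exists eps, 0 < eps /\
    forall y : Rn n, (forall i, Rabs (y i - x i) < eps) -> U y.

Definition compact_set {n : nat} (K : Rn n -> Prop) : Prop :=
  forall (I : Type) (U : I -> Rn n -> Prop),
    (forall i, open_set (U i)) ->
    (forall x, K x -> exists i, U i x) ->
    exists l : list I, forall x, K x -> exists i, In i l /\ U i x.

Definition Pt (n : nat) (Om : Rn n -> Prop) := { x : Rn n | Om x }.

Definition cont_on {n : nat} {Om : Rn n -> Prop} (u : Pt n Om -> R) : Prop :=
  forall x eps, 0 < eps -> exists del, 0 < del /\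
    forall y : Pt n Om, (forall i, Rabs (proj1_sig y i - proj1_sig x i) < del) ->
      Rabs (u y - u x) < eps.

Record CO (n : nat) (Om : Rn n -> Prop) := mkCO {
  cfun :> Pt n Om -> R;
  cfun_cont : cont_on cfun }.
Arguments cfun {n Om}.

(* r in (0, +oo] : None stands for +oo *)
Definition below (r : option R) (t : R) : Prop :=
  match r with Some r' => t < r' | None => True end.

(* Total Riemann integral (0 if not integrable; oriented as in Stdlib). *)
Definition Rint (g : R -> R) (a b : R) : R :=
  match excluded_middle_informative (inhabited (Riemann_integrable g a b)) with
  | left H => RiemannInt (epsilon H (fun _ => True))
  | right _ => 0
  end.

(* The unique sigma >= 0 with int_{-sigma}^0 g = d (0 if no such sigma). *)
Definition tauhat_gen (g : R -> R) (d : R) : R :=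
  match excluded_middle_informative (exists s, 0 <= s /\ Rint g (- s) 0 = d) with
  | left H => proj1_sig (constructive_indefinite_description _ H)
  | right _ => 0
  end.

Definition shift {X : Type} (A : R -> X) (t : R) : R -> X := fun th => A (t + th).

Definition tau_hat {n Om} (f : CO n Om -> CO n Om) (psi : R -> CO n Om)
  (delta : Pt n Om -> R) (x : Pt n Om) : R :=
  tauhat_gen (fun s => f (psi s) x) (delta x).

Definition delta0 {n Om} (f : CO n Om -> CO n Om) (phi : R -> CO n Om)
  (tau0 : Pt n Om -> R) (x : Pt n Om) : R :=
  Rint (fun s => f (phi s) x) (- tau0 x) 0.

Definition f_lipschitz {n Om} (f : CO n Om -> CO n Om) : Prop :=
  exists Lf, 0 <= Lf /\ forall (u v : CO n Om) c,
    (forall y, Rabs (u y - v y) <= c) -> forall x, Rabs (f u x - f v x) <= Lf * c.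
Definition f_bounded_pos {n Om} (f : CO n Om -> CO n Om) : Prop :=
  exists Mf, forall (u : CO n Om) x, 0 < f u x /\ f u x <= Mf.
Definition f_nonincreasing {n Om} (f : CO n Om -> CO n Om) : Prop :=
  forall (u v : CO n Om), (forall y, u y <= v y) -> forall x, f v x <= f u x.

Definition cont_into_CO {n Om} (dom : R -> Prop) (A : R -> CO n Om) : Prop :=
  forall t, dom t -> forall eps, 0 < eps -> exists del, 0 < del /\
    forall s, dom s -> Rabs (s - t) < del -> forall x, Rabs (A s x - A t x) <= eps.

(* phi in Lip_alpha with ||phi||_{Lip_alpha} + ||tau0||_oo <= M0, expressed
   through (least) bounds a, b, c of the three suprema. *)
Definition lip_alpha_bound {n Om} (alpha M0 : R) (phi : R -> CO n Om)
  (tau0 : Pt n Om -> R) : Prop :=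
  cont_into_CO (fun t => t <= 0) phi /\
  exists a b c, 0 <= a /\ 0 <= b /\ 0 <= c /\ a + b + c <= M0 /\
    (forall t x, t <= 0 -> Rabs (exp (- alpha * Rabs t) * phi t x) <= a) /\
    (forall t s x, t <= 0 -> s <= 0 -> t <> s ->
       Rabs (exp (- alpha * Rabs t) * phi t x - exp (- alpha * Rabs s) * phi s x)
         <= b * Rabs (t - s)) /\
    (forall x, Rabs (tau0 x) <= c).

(* Fix x.  Along a solution A the integrand F(u) = f(A u)(x) is continuous and bounded by Mf;
   on the window [-tau0 x, t] the solution is bounded by K = max(M, M0 e^(alpha M0)), so, f
   being nonincreasing, F >= m := min f(K) > 0, a minimum over the compact Om.  Hence
   tau_hat(A_t, delta0)(x) is the length sigma of the window [t - sigma, t] carrying the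
   integral delta0(x) (it exists by the intermediate value theorem), and sigma <= Mf M0 / m.
   Of two such windows the longer one exceeds the shorter by at most
   (|delta0 - delta0~| + sigma Lf S) / m, which gives Ltau = (1 + Lf Mf M0 / m) / m. *)

From Coquelicot Require Import Coquelicot.
From Stdlib Require Import Reals Lra ClassicalEpsilon List.
Open Scope R_scope.

Lemma Rint_RInt (g : R -> R) a b : ex_RInt g a b -> Rint g a b = RInt g a b.
Proof.
  intros H. unfold Rint.
  destruct (excluded_middle_informative _) as [Hi | Hn].
  - symmetry. apply RInt_Reals.
  - exfalso. apply Hn. constructor. now apply ex_RInt_Reals_0.
Qed.

Lemma continuity_of_lipschitz (J : R -> R) (L : R) : 0 <= L ->
  (forall a b, Rabs (J a - J b) <= L * Rabs (a - b)) -> continuity J.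
Proof.
  intros HL HJ x eps Heps. exists (eps / (L + 1)). split.
  - apply Rdiv_lt_0_compat; lra.
  - intros v [_ Hv]. simpl in *. unfold Rfunctions.R_dist in *.
    apply Rle_lt_trans with (L * (eps / (L + 1))).
    + eapply Rle_trans; [apply HJ |]. apply Rmult_le_compat_l; lra.
    + apply Rlt_le_trans with ((L + 1) * (eps / (L + 1))).
      * apply Rmult_lt_compat_r; [apply Rdiv_lt_0_compat |]; lra.
      * right. field. lra.
Qed.

Lemma abs_RInt_le_const_mul (F : R -> R) (Mf a b : R) : ex_RInt F a b ->
  (forall u, Rabs (F u) <= Mf) -> Rabs (RInt F a b) <= Mf * Rabs (b - a).
Proof.
  intros HFi HM. rewrite Rmult_comm. destruct (Rle_or_lt a b) as [Hab | Hab].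
  - rewrite (Rabs_right (b - a)) by lra. now apply abs_RInt_le_const.
  - rewrite <- opp_RInt_swap by now apply ex_RInt_swap. unfold opp; simpl. rewrite Rabs_Ropp.
    rewrite (Rabs_left (b - a)) by lra. replace (- (b - a)) with (a - b) by ring.
    apply abs_RInt_le_const; [lra | now apply ex_RInt_swap | auto].
Qed.

Lemma RInt_Rminus (F G : R -> R) a b : ex_RInt F a b -> ex_RInt G a b ->
  RInt (fun u => G u - F u) a b = RInt G a b - RInt F a b.
Proof.
  intros HF HG.
  rewrite <- (RInt_ext (fun u => minus (G u) (F u))) by reflexivity.
  now rewrite (RInt_minus (V := R_CompleteNormedModule)).
Qed.

Section IntegralsUpTo.

Variables (F : R -> R) (t : R).
Hypothesis F_cont : forall u, u <= t -> continuous F u.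

Lemma ex_RInt_le a b : a <= t -> b <= t -> ex_RInt F a b.
Proof.
  intros Ha Hb. apply (ex_RInt_continuous (V := R_CompleteNormedModule)).
  intros z [_ Hz]. apply F_cont. eapply Rle_trans; [exact Hz |]. now apply Rmax_lub.
Qed.

Lemma RInt_Chasles_le a b c : a <= t -> b <= t -> c <= t ->
  RInt F a b + RInt F b c = RInt F a c.
Proof.
  intros Ha Hb Hc. apply (RInt_Chasles (V := R_CompleteNormedModule)); now apply ex_RInt_le.
Qed.

Lemma RInt_ge_mul_length a b m : a <= b <= t ->
  (forall u, a <= u <= b -> m <= F u) -> (b - a) * m <= RInt F a b.
Proof.
  intros Hab Hm. replace ((b - a) * m) with (RInt (fun _ => m) a b) by now rewrite RInt_const.
  apply RInt_le; [lra | apply ex_RInt_const | apply ex_RInt_le; lra |].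
  intros; apply Hm; lra.
Qed.

Lemma Rint_shift s : 0 <= s -> Rint (fun v => F (t + v)) (- s) 0 = RInt F (t - s) t.
Proof.
  intros Hs.
  assert (Hcont : forall z, - s <= z <= 0 -> continuous (fun v => F (t + v)) z).
  { intros z Hz. apply (continuous_comp (fun v => t + v) F).
    - apply (continuous_plus (fun _ => t) (fun v => v)); [apply continuous_const | apply continuous_id].
    - apply F_cont; lra. }
  rewrite Rint_RInt.
  - replace (t - s) with (1 * (- s) + t) by ring.
    replace t with (1 * 0 + t) at 2 by ring.
    rewrite <- RInt_comp_lin by (apply ex_RInt_le; lra).
    apply RInt_ext. intros z _. unfold scal; simpl; unfold mult; simpl.
    rewrite Rmult_1_l. f_equal. ring.
  - apply (ex_RInt_continuous (V := R_CompleteNormedModule)). intros z Hz. apply Hcont.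
    rewrite Rmin_left, Rmax_right in Hz by lra. exact Hz.
Qed.

End IntegralsUpTo.

Lemma continuous_Rmin_r (t u : R) : continuous (fun v => Rmin v t) u.
Proof.
  apply continuity_pt_filterlim. apply (continuity_of_lipschitz _ 1); [lra |].
  intros a b. unfold Rmin.
  repeat destruct Rle_dec; unfold Rabs; repeat destruct Rcase_abs; lra.
Qed.

Section BackwardLength.

Variables (F : R -> R) (t Mf : R).
Hypothesis F_cont : forall u, u <= t -> continuous F u.
Hypothesis F_pos_bounded : forall u, 0 < F u <= Mf.

(* [F] is frozen beyond [t] so that [s |-> RInt F (t - s) t] becomes Lipschitz on all of [R]. *)
Lemma RInt_up_to_surjective T d : 0 <= T -> 0 <= d <= RInt F (t - T) t ->
  exists s, 0 <= s <= T /\ RInt F (t - s) t = d.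
Proof.
  intros HT Hd.
  set (G := fun u => F (Rmin u t)).
  assert (G_cont : forall u, continuous G u).
  { intro u. apply (continuous_comp (fun v => Rmin v t) F);
      [apply continuous_Rmin_r | apply F_cont, Rmin_r]. }
  assert (G_ex : forall a b, ex_RInt G a b).
  { intros a b. apply (ex_RInt_continuous (V := R_CompleteNormedModule)). intros; apply G_cont. }
  assert (G_eq : forall s, 0 <= s -> RInt G (t - s) t = RInt F (t - s) t).
  { intros s Hs. apply RInt_ext. intros z Hz.
    rewrite Rmax_right in Hz by lra. unfold G. rewrite Rmin_left by lra. reflexivity. }
  set (J := fun s => RInt G (t - s) t).
  assert (J_cont : continuity J).
  { apply (continuity_of_lipschitz J Mf); [pose proof (F_pos_bounded 0); lra |].
    intros a b. unfold J.
    rewrite <- (RInt_Chasles (V := R_CompleteNormedModule) G (t - a) (t - b) t) by apply G_ex.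
    unfold plus; simpl. unfold Rminus at 1. rewrite Rplus_assoc, Rplus_opp_r, Rplus_0_r.
    replace (Rabs (a - b)) with (Rabs (t - b - (t - a)))
      by (f_equal; ring).
    apply abs_RInt_le_const_mul; [apply G_ex |].
    intro u. destruct (F_pos_bounded (Rmin u t)). unfold G. rewrite Rabs_right; lra. }
  destruct (IVT_gen J 0 T d J_cont) as [s [Hs HJs]].
  - unfold J. rewrite Rminus_0_r, RInt_point, G_eq by lra.
    rewrite Rmin_left, Rmax_right; unfold zero; simpl; lra.
  - rewrite Rmin_left, Rmax_right in Hs by lra.
    exists s. split; [exact Hs |]. rewrite <- G_eq by lra. exact HJs.
Qed.

Lemma RInt_up_to_le_length T s : 0 <= T -> 0 <= s ->
  RInt F (t - s) t <= RInt F (t - T) t -> s <= T.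
Proof.
  intros HT Hs Hle. destruct (Rle_or_lt s T) as [HsT | HTs]; [exact HsT | exfalso].
  rewrite <- (RInt_Chasles_le F t F_cont (t - s) (t - T) t) in Hle by lra.
  assert (0 < RInt F (t - s) (t - T)).
  { apply RInt_gt_0; [lra | intros; apply F_pos_bounded | intros; apply F_cont; lra]. }
  lra.
Qed.

Lemma tauhat_gen_spec T d : 0 <= T -> 0 <= d <= RInt F (t - T) t ->
  0 <= tauhat_gen (fun v => F (t + v)) d <= T /\
  RInt F (t - tauhat_gen (fun v => F (t + v)) d) t = d.
Proof.
  intros HT Hd. unfold tauhat_gen.
  destruct (excluded_middle_informative _) as [Hex | Hnex].
  - destruct (constructive_indefinite_description _ Hex) as [s [Hs Hint]]; simpl.
    rewrite (Rint_shift F t F_cont s Hs) in Hint.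
    split; [split; [exact Hs |] | exact Hint].
    apply (RInt_up_to_le_length T); lra.
  - exfalso. apply Hnex.
    destruct (RInt_up_to_surjective T d HT Hd) as [s [Hs Hint]].
    exists s. split; [lra |]. now rewrite (Rint_shift F t F_cont) by lra.
Qed.

End BackwardLength.

Lemma RInt_up_to_gap (F G : R -> R) (t m LS sg sgt : R) :
  (forall u, u <= t -> continuous F u) -> (forall u, u <= t -> continuous G u) ->
  0 <= sg <= sgt ->
  (forall u, t - sgt <= u <= t -> m <= G u) ->
  (forall u, t - sg <= u <= t -> Rabs (F u - G u) <= LS) ->
  (sgt - sg) * m <= RInt G (t - sgt) t - RInt F (t - sg) t + sg * LS.
Proof.
  intros HF HG Hsg HGm HFG.
  rewrite <- (RInt_Chasles_le G t HG (t - sgt) (t - sg) t) by lra.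
  assert (Hgap : (t - sg - (t - sgt)) * m <= RInt G (t - sgt) (t - sg)).
  { apply (RInt_ge_mul_length G t HG); [lra |]. intros; apply HGm; lra. }
  assert (Hclose : Rabs (RInt (fun u => G u - F u) (t - sg) t) <= (t - (t - sg)) * LS).
  { apply abs_RInt_le_const; [lra | |].
    - apply (ex_RInt_minus (V := R_NormedModule)); apply (ex_RInt_le _ t); auto; lra.
    - intros u Hu. rewrite Rabs_minus_sym. apply HFG; lra. }
  rewrite RInt_Rminus in Hclose by (apply (ex_RInt_le _ t); auto; lra).
  pose proof (Rabs_maj2 (RInt G (t - sg) t - RInt F (t - sg) t)). lra.
Qed.

Lemma RInt_up_to_dist (F G : R -> R) (t m LS sg sgt B : R) :
  0 < m -> 0 <= LS -> 0 <= sg -> 0 <= sgt ->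
  (forall u, u <= t -> continuous F u) -> (forall u, u <= t -> continuous G u) ->
  (forall u, t - sg <= u <= t -> m <= F u) -> (forall u, t - sgt <= u <= t -> m <= G u) ->
  (forall u, t - Rmax sg sgt <= u <= t -> Rabs (F u - G u) <= LS) ->
  RInt F (t - sg) t <= B -> RInt G (t - sgt) t <= B ->
  Rabs (sg - sgt) * m <= Rabs (RInt F (t - sg) t - RInt G (t - sgt) t) + B / m * LS.
Proof.
  intros Hm HLS Hsg Hsgt HF HG HFm HGm HFG HFB HGB.
  assert (Hlen : forall (H : R -> R) s, 0 <= s -> (forall u, u <= t -> continuous H u) ->
            (forall u, t - s <= u <= t -> m <= H u) -> RInt H (t - s) t <= B -> s * LS <= B / m * LS).
  { intros H s Hs HH HHm HHB. apply Rmult_le_compat_r; [exact HLS |].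
    apply Rmult_le_reg_r with m; [exact Hm |]. unfold Rdiv. rewrite Rmult_assoc, Rinv_l by lra.
    pose proof (RInt_ge_mul_length H t HH (t - s) t m ltac:(lra) HHm). lra. }
  destruct (Rle_or_lt sg sgt) as [Hle | Hlt].
  - pose proof (RInt_up_to_gap F G t m LS sg sgt HF HG (conj Hsg Hle) HGm
      ltac:(intros; apply HFG; pose proof (Rmax_l sg sgt); lra)).
    pose proof (Hlen F sg Hsg HF HFm HFB).
    rewrite Rabs_minus_sym, Rabs_right by lra.
    pose proof (Rabs_maj2 (RInt F (t - sg) t - RInt G (t - sgt) t)). lra.
  - pose proof (RInt_up_to_gap G F t m LS sgt sg HG HF (conj Hsgt (Rlt_le _ _ Hlt)) HFm
      ltac:(intros; rewrite Rabs_minus_sym; apply HFG; pose proof (Rmax_r sg sgt); lra)).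
    pose proof (Hlen G sgt Hsgt HG HGm HGB).
    rewrite Rabs_right by lra.
    pose proof (Rle_abs (RInt F (t - sg) t - RInt G (t - sgt) t)). lra.
Qed.

Lemma list_pos_lower_bound {I : Type} (h : I -> R) (l : list I) :
  (forall i, 0 < h i) -> exists m, 0 < m /\ forall i, In i l -> m <= h i.
Proof.
  intros Hh. induction l as [| a l [m [Hm Hl]]].
  - exists 1. split; [lra | intros i []].
  - exists (Rmin (h a) m). split; [now apply Rmin_glb_lt |].
    intros i [<- | Hi]; [apply Rmin_l |]. eapply Rle_trans; [apply Rmin_r | auto].
Qed.

(* Cover [Om] by the open sets on which [g] stays above half its value at a center. *)
Lemma compact_pos_lower_bound n (Om : Rn n -> Prop) (HOm : compact_set Om) (g : CO n Om) :
  (forall y, 0 < g y) -> exists m, 0 < m /\ forall y, m <= g y.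
Proof.
  intros Hpos.
  assert (Hd : forall y : Pt n Om, { d | 0 < d /\ forall z : Pt n Om,
     (forall i, Rabs (proj1_sig z i - proj1_sig y i) < d) -> Rabs (g z - g y) < g y / 2 }).
  { intro y. apply constructive_indefinite_description.
    apply (cfun_cont _ _ g). specialize (Hpos y). lra. }
  set (del := fun y => proj1_sig (Hd y)).
  set (U := fun (y : Pt n Om) (z : Rn n) => exists e, 0 < e /\ forall w : Rn n,
     (forall i, Rabs (w i - z i) < e) -> forall i, Rabs (w i - proj1_sig y i) < del y).
  destruct (HOm (Pt n Om) U) as [l Hl].
  - intros y z [e [He Hw]]. exists (e / 2). split; [lra |].
    intros w Hw2. exists (e / 2). split; [lra |]. intros w' Hw'. apply Hw. intro i.
    specialize (Hw' i). specialize (Hw2 i).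
    replace (w' i - z i) with ((w' i - w i) + (w i - z i)) by ring.
    eapply Rle_lt_trans; [apply Rabs_triang | lra].
  - intros z Hz. exists (exist _ z Hz), (del (exist _ z Hz)). split.
    + exact (proj1 (proj2_sig (Hd (exist _ z Hz)))).
    + intros w Hw i. apply Hw.
  - destruct (list_pos_lower_bound (fun y => g y / 2) l) as [m [Hm Hml]].
    { intro y. specialize (Hpos y). lra. }
    exists m. split; [exact Hm |]. intro y.
    destruct (Hl (proj1_sig y) (proj2_sig y)) as [i [Hi [e [He Hw]]]].
    assert (Hyi : forall k, Rabs (proj1_sig y k - proj1_sig i k) < del i).
    { apply Hw. intro k. rewrite Rminus_diag, Rabs_R0. exact He. }
    pose proof (proj2 (proj2_sig (Hd i)) y Hyi) as Hgy. apply Rabs_def2 in Hgy.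
    specialize (Hml i Hi). simpl in Hml. lra.
Qed.

(* [Om] may be empty, so the bound given by [f_bounded_pos] need not be nonnegative. *)
Lemma f_bounded_pos_nonneg n Om (f : CO n Om -> CO n Om) :
  f_bounded_pos f -> exists Mf, 0 <= Mf /\ forall u x, 0 < f u x <= Mf.
Proof.
  intros [Mf0 HMf0]. exists (Rabs Mf0). split; [apply Rabs_pos |].
  intros u x. destruct (HMf0 u x). split; [lra | eapply Rle_trans; [eauto | apply Rle_abs]].
Qed.

Lemma cont_on_const n (Om : Rn n -> Prop) (c : R) : @cont_on n Om (fun _ => c).
Proof.
  intros x eps Heps. exists 1. split; [lra |]. intros. now rewrite Rminus_diag, Rabs_R0.
Qed.

Definition const_CO n (Om : Rn n -> Prop) (c : R) : CO n Om :=
  mkCO n Om (fun _ => c) (cont_on_const n Om c).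

Lemma lip_alpha_bound_tau0 n Om (alpha M0 : R) (phi : R -> CO n Om) (tau0 : Pt n Om -> R) :
  lip_alpha_bound alpha M0 phi tau0 -> forall x, tau0 x <= M0.
Proof.
  intros [_ [a [b [c [Ha [Hb [Hc [Habc [_ [_ H3]]]]]]]]]] x.
  pose proof (H3 x). pose proof (Rle_abs (tau0 x)). lra.
Qed.

(* On [-M0, 0] the weight [exp (- alpha |u|)] is at least [exp (- alpha M0)]. *)
Lemma lip_alpha_bound_history n Om (alpha M0 : R) (phi : R -> CO n Om) (tau0 : Pt n Om -> R) :
  0 <= alpha -> lip_alpha_bound alpha M0 phi tau0 ->
  forall u y x, - tau0 x <= u <= 0 -> Rabs (phi u y) <= M0 * exp (alpha * M0).
Proof.
  intros Hal Hlip u y x Hu.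
  pose proof (lip_alpha_bound_tau0 n Om alpha M0 phi tau0 Hlip x) as Htau.
  destruct Hlip as [_ [a [b [c [Ha [Hb [Hc [Habc [H1 _]]]]]]]]].
  assert (Hau : alpha * Rabs u <= alpha * M0).
  { apply Rmult_le_compat_l; [exact Hal |]. rewrite Rabs_left1; lra. }
  replace (phi u y) with (exp (alpha * Rabs u) * (exp (- alpha * Rabs u) * phi u y)).
  - rewrite Rabs_mult, (Rabs_right (exp _)) by (left; apply exp_pos).
    rewrite Rmult_comm. apply Rmult_le_compat; [apply Rabs_pos | left; apply exp_pos | |].
    + specialize (H1 u y (proj2 Hu)). lra.
    + destruct (Rle_lt_or_eq_dec _ _ Hau) as [Hlt | ->]; [left; now apply exp_increasing | lra].
  - rewrite <- Rmult_assoc, <- exp_plus.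
    replace (alpha * Rabs u + - alpha * Rabs u) with 0 by ring. rewrite exp_0. ring.
Qed.

Lemma below_le (r : option R) (t u : R) : below r t -> u <= t -> below r u.
Proof. destruct r; simpl; lra. Qed.

Lemma history_window_bound n Om (alpha M0 M : R) (r : option R)
  (phi A : R -> CO n Om) (tau0 : Pt n Om -> R) (t : R) (x : Pt n Om) :
  0 <= alpha -> lip_alpha_bound alpha M0 phi tau0 ->
  (forall u y, u <= 0 -> A u y = phi u y) ->
  (forall u y, 0 <= u -> below r u -> Rabs (A u y) <= M) -> below r t ->
  forall u y, - tau0 x <= u <= t -> A u y <= Rmax M (M0 * exp (alpha * M0)).
Proof.
  intros Hal Hlip Hhist HM Ht u y Hu. eapply Rle_trans; [apply Rle_abs |].
  destruct (Rle_or_lt 0 u) as [Hu0 | Hu0].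
  - eapply Rle_trans; [apply HM; [lra | now apply (below_le r t)] | apply Rmax_l].
  - rewrite Hhist by lra. eapply Rle_trans; [| apply Rmax_r].
    apply (lip_alpha_bound_history n Om alpha M0 phi tau0 Hal Hlip u y x). lra.
Qed.

Section History.

Variables (n : nat) (Om : Rn n -> Prop) (f : CO n Om -> CO n Om) (Lf Mf : R).
Hypothesis Lf_nonneg : 0 <= Lf.
Hypothesis f_lip : forall (u v : CO n Om) c,
  (forall y, Rabs (u y - v y) <= c) -> forall x, Rabs (f u x - f v x) <= Lf * c.
Hypothesis f_pos_bounded : forall (u : CO n Om) x, 0 < f u x <= Mf.

Variables (r : option R) (B ph : R -> CO n Om) (ta : CO n Om) (t : R) (x : Pt n Om).
Hypothesis B_cont : cont_into_CO (below r) B.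
Hypothesis B_history : forall u y, u <= 0 -> B u y = ph u y.
Hypothesis ta_nonneg : 0 <= ta x.
Hypothesis t_nonneg : 0 <= t.
Hypothesis t_below : below r t.

Lemma continuous_f_history u : u <= t -> continuous (fun v => f (B v) x) u.
Proof.
  intros Hu. apply continuity_pt_filterlim. intros eps Heps.
  assert (Hu' : below r u) by now apply (below_le r t).
  destruct (B_cont u Hu' (eps / (Lf + 1))) as [d1 [Hd1 Hc]]; [apply Rdiv_lt_0_compat; lra |].
  assert (Hopen : exists d2, 0 < d2 /\ forall v, Rabs (v - u) < d2 -> below r v).
  { destruct r as [r' |]; simpl in *.
    - exists (r' - u). split; [lra |]. intros v Hv. apply Rabs_def2 in Hv. lra.
    - exists 1. split; [lra | auto]. }
  destruct Hopen as [d2 [Hd2 Hb]].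
  exists (Rmin d1 d2). split; [now apply Rmin_glb_lt |].
  intros v [_ Hv]. simpl in *. unfold Rfunctions.R_dist in *.
  apply Rle_lt_trans with (Lf * (eps / (Lf + 1))).
  - apply f_lip. intro y. apply Hc; [apply Hb |];
      eapply Rlt_le_trans; [exact Hv | apply Rmin_r | exact Hv | apply Rmin_l].
  - apply Rlt_le_trans with ((Lf + 1) * (eps / (Lf + 1))).
    + apply Rmult_lt_compat_r; [apply Rdiv_lt_0_compat |]; lra.
    + right. field. lra.
Qed.

Lemma delta0_eq_RInt : delta0 f ph ta x = RInt (fun u => f (B u) x) (- ta x) 0.
Proof.
  assert (Heq : forall u, - ta x <= u <= 0 -> f (ph u) x = f (B u) x).
  { intros u Hu. pose proof (f_lip (B u) (ph u) 0) as HL.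
    assert (H0 : Rabs (f (B u) x - f (ph u) x) <= Lf * 0).
    { apply HL. intro y. rewrite B_history, Rminus_diag, Rabs_R0 by lra. lra. }
    rewrite Rmult_0_r in H0. apply Rabs_le_between in H0. lra. }
  assert (Hint : ex_RInt (fun u => f (B u) x) (- ta x) 0).
  { apply (ex_RInt_le _ t); [exact continuous_f_history | lra | lra]. }
  unfold delta0. rewrite Rint_RInt.
  - apply RInt_ext. intros z Hz. rewrite Rmin_left, Rmax_right in Hz by lra. apply Heq; lra.
  - apply (ex_RInt_ext (fun u => f (B u) x)); [| exact Hint].
    intros z Hz. rewrite Rmin_left, Rmax_right in Hz by lra. symmetry. apply Heq; lra.
Qed.

Lemma delta0_le : delta0 f ph ta x <= Mf * ta x.
Proof.
  rewrite delta0_eq_RInt.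
  replace (ta x) with (Rabs (0 - - ta x)) at 2 by (rewrite Rabs_right; lra).
  eapply Rle_trans; [apply Rle_abs | apply abs_RInt_le_const_mul].
  - apply (ex_RInt_le _ t); [exact continuous_f_history | lra | lra].
  - intro u. destruct (f_pos_bounded (B u) x). rewrite Rabs_right; lra.
Qed.

Lemma tau_hat_spec :
  0 <= tau_hat f (shift B t) (delta0 f ph ta) x <= t + ta x /\
  RInt (fun u => f (B u) x) (t - tau_hat f (shift B t) (delta0 f ph ta) x) t
    = delta0 f ph ta x.
Proof.
  set (F := fun u => f (B u) x).
  assert (HF : forall u, 0 < F u <= Mf) by (intro; apply f_pos_bounded).
  apply (tauhat_gen_spec F t Mf continuous_f_history HF (t + ta x)); [lra |].
  rewrite delta0_eq_RInt. fold F.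
  replace (t - (t + ta x)) with (- ta x) by ring.
  rewrite <- (RInt_Chasles_le F t continuous_f_history (- ta x) 0 t) by lra.
  assert (0 <= RInt F (- ta x) 0 /\ 0 <= RInt F 0 t) as [H1 H2].
  { split; apply RInt_ge_0; try lra;
      try (intros; left; apply HF); apply (ex_RInt_le F t continuous_f_history); lra. }
  lra.
Qed.

End History.

Section TwoSolutions.

Variables (n : nat) (Om : Rn n -> Prop) (f : CO n Om -> CO n Om) (Lf Mf alpha M0 M m : R).
Hypothesis Lf_nonneg : 0 <= Lf.
Hypothesis f_lip : forall (u v : CO n Om) c,
  (forall y, Rabs (u y - v y) <= c) -> forall x, Rabs (f u x - f v x) <= Lf * c.
Hypothesis f_pos_bounded : forall (u : CO n Om) x, 0 < f u x <= Mf.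
Hypothesis Mf_nonneg : 0 <= Mf.
Hypothesis f_nonincr : f_nonincreasing f.
Hypothesis alpha_nonneg : 0 <= alpha.
Hypothesis m_pos : 0 < m.
Hypothesis f_const_ge : forall y, m <= f (const_CO n Om (Rmax M (M0 * exp (alpha * M0)))) y.

Variables (r : option R) (t : R) (x : Pt n Om).
Hypothesis t_nonneg : 0 <= t.
Hypothesis t_below : below r t.

Lemma f_history_ge (phi A : R -> CO n Om) (tau0 : CO n Om) :
  lip_alpha_bound alpha M0 phi tau0 -> (forall u y, u <= 0 -> A u y = phi u y) ->
  (forall u y, 0 <= u -> below r u -> Rabs (A u y) <= M) ->
  forall u, - tau0 x <= u <= t -> m <= f (A u) x.
Proof.
  intros Hphi Hhist HM u Hu. eapply Rle_trans; [apply f_const_ge | apply f_nonincr].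
  intro y. now apply (history_window_bound n Om alpha M0 M r phi A tau0 t x).
Qed.

Lemma tau_hat_dist_le (phi phit A At : R -> CO n Om) (tau0 taut0 : CO n Om) (taubar S : R) :
  0 <= tau0 x -> 0 <= taut0 x -> tau0 x <= taubar -> taut0 x <= taubar ->
  lip_alpha_bound alpha M0 phi tau0 -> lip_alpha_bound alpha M0 phit taut0 ->
  cont_into_CO (below r) A -> cont_into_CO (below r) At ->
  (forall u y, u <= 0 -> A u y = phi u y) -> (forall u y, u <= 0 -> At u y = phit u y) ->
  (forall u y, 0 <= u -> below r u -> Rabs (A u y) <= M) ->
  (forall u y, 0 <= u -> below r u -> Rabs (At u y) <= M) ->
  (forall s, - taubar <= s -> below r s -> forall y, Rabs (A s y - At s y) <= S) ->
  Rabs (tau_hat f (shift A t) (delta0 f phi tau0) x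
        - tau_hat f (shift At t) (delta0 f phit taut0) x) * m
    <= Rabs (delta0 f phi tau0 x - delta0 f phit taut0 x) + Mf * M0 / m * (Lf * S).
Proof.
  intros Htau0 Htaut0 Htb Httb Hphi Hphit HA HAt HAphi HAtphi HAM HAtM HS.
  destruct (tau_hat_spec n Om f Lf Mf Lf_nonneg f_lip f_pos_bounded r A phi tau0 t x
              HA HAphi Htau0 t_nonneg t_below) as [Hsg Hint].
  destruct (tau_hat_spec n Om f Lf Mf Lf_nonneg f_lip f_pos_bounded r At phit taut0 t x
              HAt HAtphi Htaut0 t_nonneg t_below) as [Hsgt Hintt].
  pose proof (delta0_le n Om f Lf Mf Lf_nonneg f_lip f_pos_bounded r A phi tau0 t x
                HA HAphi Htau0 t_nonneg t_below).
  pose proof (delta0_le n Om f Lf Mf Lf_nonneg f_lip f_pos_bounded r At phit taut0 t x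
                HAt HAtphi Htaut0 t_nonneg t_below).
  pose proof (lip_alpha_bound_tau0 n Om alpha M0 phi tau0 Hphi x).
  pose proof (lip_alpha_bound_tau0 n Om alpha M0 phit taut0 Hphit x).
  set (sg := tau_hat f (shift A t) (delta0 f phi tau0) x) in *.
  set (sgt := tau_hat f (shift At t) (delta0 f phit taut0) x) in *.
  assert (HS0 : 0 <= S).
  { pose proof (HS t ltac:(lra) t_below x). pose proof (Rabs_pos (A t x - At t x)). lra. }
  rewrite <- Hint, <- Hintt.
  apply RInt_up_to_dist; try lra; try nra.
  - apply (continuous_f_history n Om f Lf Lf_nonneg f_lip r A t x HA t_below).
  - apply (continuous_f_history n Om f Lf Lf_nonneg f_lip r At t x HAt t_below).
  - intros u Hu. apply (f_history_ge phi A tau0); auto; lra.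
  - intros u Hu. apply (f_history_ge phit At taut0); auto; lra.
  - intros u Hu. apply f_lip. intro y. apply HS.
    + assert (Rmax sg sgt <= t + taubar) by (apply Rmax_lub; lra). lra.
    + apply (below_le r t); [exact t_below | lra].
Qed.

End TwoSolutions.

Theorem lemma3p9 (n : nat) (Om : Rn n -> Prop) (HOm : compact_set Om)
  (alpha : R) (Halpha : 0 <= alpha)
  (f : CO n Om -> CO n Om)
  (Hflip : f_lipschitz f) (Hfbd : f_bounded_pos f) (Hfmon : f_nonincreasing f)
  (M0 M : R) (HM0 : 0 < M0) :
  exists Ltau, 0 < Ltau /\
  forall (r : option R) (phi phit : R -> CO n Om) (tau0 taut0 : CO n Om)
    (A At : R -> CO n Om) (taubar : R),
    (match r with Some r' => 0 < r' | None => True end) ->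
    (forall x, 0 <= tau0 x) -> (forall x, 0 <= taut0 x) ->
    lip_alpha_bound alpha M0 phi tau0 ->
    lip_alpha_bound alpha M0 phit taut0 ->
    cont_into_CO (below r) A -> cont_into_CO (below r) At ->
    (forall t x, t <= 0 -> A t x = phi t x) ->
    (forall t x, t <= 0 -> At t x = phit t x) ->
    is_lub (fun y => exists t x, 0 <= t /\ below r t /\
              (y = Rabs (A t x) \/ y = Rabs (At t x))) M ->
    is_lub (fun y => exists x, y = tau0 x \/ y = taut0 x) taubar ->
    forall t x, 0 <= t -> below r t ->
    forall S D,
      (forall s, - taubar <= s -> below r s -> forall y, Rabs (A s y - At s y) <= S) ->
      (forall y, Rabs (delta0 f phi tau0 y - delta0 f phit taut0 y) <= D) ->
      Rabs (tau_hat f (shift A t) (delta0 f phi tau0) x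
            - tau_hat f (shift At t) (delta0 f phit taut0) x)
        <= Ltau * (S + D).
Proof.
  destruct Hflip as [Lf [HLf Hlip]].
  destruct (f_bounded_pos_nonneg n Om f Hfbd) as [Mf [HMf_nonneg HMf]].
  destruct (compact_pos_lower_bound n Om HOm
              (f (const_CO n Om (Rmax M (M0 * exp (alpha * M0)))))) as [m [Hm Hfm]];
    [intro; apply HMf |].
  set (q := Lf * Mf * M0 / m).
  assert (Hq : 0 <= q).
  { unfold q. apply Rmult_le_pos; [| left; now apply Rinv_0_lt_compat].
    apply Rmult_le_pos; [apply Rmult_le_pos |]; lra. }
  exists ((1 + q) / m). split; [apply Rdiv_lt_0_compat; lra |].
  intros r phi phit tau0 taut0 A At taubar _ Htau0 Htaut0 Hphi Hphit HA HAt HAphi HAtphi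
    HM Htaubar t x Ht Htr S D HS HD.
  assert (HAM : forall u y, 0 <= u -> below r u -> Rabs (A u y) <= M /\ Rabs (At u y) <= M).
  { intros u y Hu Hru. split; apply (proj1 HM); exists u, y; auto. }
  assert (tau0 x <= taubar /\ taut0 x <= taubar) as [Htb Httb].
  { split; apply (proj1 Htaubar); exists x; auto. }
  assert (HS0 : 0 <= S).
  { pose proof (Htau0 x). pose proof (HS t ltac:(lra) Htr x).
    pose proof (Rabs_pos (A t x - At t x)). lra. }
  pose proof (tau_hat_dist_le n Om f Lf Mf alpha M0 M m HLf Hlip HMf HMf_nonneg Hfmon Halpha Hm
    Hfm r t x Ht Htr phi phit A At tau0 taut0 taubar S (Htau0 x) (Htaut0 x) Htb Httb Hphi Hphit
    HA HAt HAphi HAtphi (fun u y Hu Hru => proj1 (HAM u y Hu Hru))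
    (fun u y Hu Hru => proj2 (HAM u y Hu Hru)) HS) as Hdist.
  assert (Hqs : Mf * M0 / m * (Lf * S) = q * S) by (unfold q; field; lra).
  pose proof (HD x). pose proof (Rabs_pos (delta0 f phi tau0 x - delta0 f phit taut0 x)).
  apply Rmult_le_reg_r with m; [exact Hm |].
  replace ((1 + q) / m * (S + D) * m) with ((1 + q) * (S + D)) by (field; lra).
  nra.
Qed.
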